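(* Let $X$ be a real random variable with finite mean $\mu:=\mathbb{E}(X)$ such that $\mu$ is also a median of $X$, i.e. $\mathbb{P}(X\ge\mu)\ge\frac12$ and $\mathbb{P}(X\le\mu)\ge\frac12$. Then \[ \mathbb{E}(X\mid X\ge \mu) \le \mu + \sqrt{\text{Var}(X)}. \] *)

From HB Require Import structures.
From mathcomp Require Import all_boot all_order all_algebra.
From mathcomp Require Import all_classical all_reals all_analysis.
Set Implicit Arguments. Unset Strict Implicit. Unset Printing Implicit Defensive.
Import Order.TTheory GRing.Theory Num.Theory.
Local Open Scope classical_set_scope.
Local Open Scope ring_scope.
Local Open Scope ereal_scope.

Definition cond_expectation_event d (T : measurableType d) (R : realType)
  (P : probability T R) (X : T -> R) (A : set T) : \bar R :=
  ((fine (P A))^-1)%:E * \int[P]_(x in A) (X x)%:E.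

(* Let A = [X >= mu] and p = P(A), so that p >= 1/2.  Cauchy-Schwarz for the
   covariance of X and the indicator of A gives
     E[X 1_A] - mu p = Cov(X, 1_A) <= sigma sqrt(p (1 - p)),
   and p (1 - p) <= p^2 because p >= 1/2; dividing by p yields
   E[X | A] <= mu + sigma.  An infinite variance makes the bound trivial. *)

From HB Require Import structures.
From mathcomp Require Import all_boot all_order all_algebra.
From mathcomp Require Import all_classical all_reals all_analysis.
From mathcomp Require Import lra.
Set Implicit Arguments. Unset Strict Implicit. Unset Printing Implicit Defensive.
Import Order.TTheory GRing.Theory Num.Theory.
Import measurable_realfun.
Local Open Scope classical_set_scope.
Local Open Scope ring_scope.

Lemma sqrtr_sub_sqr_le (R : rcfType) (p : R) :
  2^-1 <= p -> Num.sqrt (p - p ^+ 2) <= p.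
Proof.
move=> p_ge; have p0 : 0 <= p by apply: le_trans p_ge; rewrite invr_ge0.
by rewrite -[leRHS](ger0_norm p0) -sqrtr_sqr ler_wsqrtr//; nra.
Qed.

Lemma cond_mean_bound (R : rcfType) (m a p v : R) : 2^-1 <= p ->
  a - m * p <= Num.sqrt v * Num.sqrt (p - p ^+ 2) -> p^-1 * a <= m + Num.sqrt v.
Proof.
move=> p_ge cov_le.
have p_gt0 : 0 < p by apply: lt_le_trans p_ge; rewrite invr_gt0.
rewrite ler_pdivrMl// mulrDr.
have : Num.sqrt v * Num.sqrt (p - p ^+ 2) <= Num.sqrt v * p.
  by rewrite ler_wpM2l ?sqrtr_ge0 ?sqrtr_sub_sqr_le.
nra.
Qed.

Lemma indic_sqr (T : Type) (R : pzRingType) (A : set T) :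
  \1_A ^+ 2 = \1_A :> (T -> R).
Proof. by rewrite expr2 -[in RHS](setIid A) indicI. Qed.

Section square_integrable.
Context d (T : measurableType d) (R : realType) (mu : {measure set T -> \bar R}).

Lemma integrable_sqr_Lfun2 (f : T -> R) : measurable_fun setT f ->
  mu.-integrable setT (EFin \o (fun x => f x ^+ 2)) -> f \in Lfun mu 2%:E.
Proof.
move=> mf /integrableP[_ fi].
rewrite inE; apply/andP; split; rewrite inE//=.
rewrite /finite_norm unlock /Lnorm poweR_lty//.
by under eq_integral => x _ do rewrite /= powR_mulrn// -normrX.
Qed.

End square_integrable.

Local Open Scope ereal_scope.

Section indicator_moments.
Context d (T : measurableType d) (R : realType) (P : probability T R).

Lemma variance_fin_numE (X : T -> R) : X \in Lfun P 1 ->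
  ('V_P[X] \is a fin_num) = (X \in Lfun P 2%:E).
Proof.
move=> X1; apply/idP/idP => [VX|]; last exact: variance_fin_num.
have /measurable_int/measurable_EFinP mX := (Lfun1_integrable _ _).1 X1.
pose Y := (X \- cst (fine 'E_P[X]))%R.
have mY : measurable_fun setT Y by exact: measurable_funB.
have Y2 : Y \in Lfun P 2%:E.
  apply: integrable_sqr_Lfun2 => //; apply/integrableP; split.
    by apply/measurable_EFinP; exact: measurable_funX.
  have VY : 'V_P[X] = 'E_P[Y ^+ 2] by rewrite /variance covariance.unlock expr2.
  move: VX; rewrite VY expectation.unlock => /fin_numPlt/andP[_].
  apply: le_lt_trans.
  by under eq_integral => x _ do rewrite gee0_abs ?lee_fin ?sqr_ge0//.
have -> : X = (Y \+ cst (fine 'E_P[X]))%R.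
  by apply/funext => x; rewrite /Y /= subrK.
by apply: rpredD => // [|?]; [rewrite lee_fin ler1n | exact: Lfun_cst].
Qed.

Lemma indic_Lfun2 (A : set T) : measurable A -> \1_A \in Lfun P 2%:E.
Proof.
move=> mA; apply: integrable_sqr_Lfun2; first exact: measurable_indic.
by rewrite -exprfctE indic_sqr; exact: integrable_indic.
Qed.

Lemma variance_indic (A : set T) : measurable A -> 'V_P[\1_A] = P A - P A ^+ 2.
Proof.
by move=> mA; rewrite varianceE ?indic_Lfun2// indic_sqr expectation_indic.
Qed.

Lemma expectation_mul_indic (X : T -> R) (A : set T) :
  'E_P[X * \1_A] = \int[P]_(x in A) (X x)%:E.
Proof.
rewrite integral_mkcond expectation.unlock; apply: eq_integral => x _.
by rewrite patchE mulrfctE indicE; case: (x \in A); rewrite ?mulr1 ?mulr0.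
Qed.

Lemma covariance_indic (X : T -> R) (A : set T) :
  X \in Lfun P 2%:E -> measurable A ->
  covariance P X \1_A = \int[P]_(x in A) (X x)%:E - 'E_P[X] * P A.
Proof.
move=> X2 mA; have P_fin : P setT \is a fin_num by exact: fin_num_measure.
have A2 := indic_Lfun2 mA.
rewrite covarianceE ?Lfun2_mul_Lfun1 ?(Lfun_subset12 P_fin)//.
by rewrite expectation_mul_indic expectation_indic.
Qed.

End indicator_moments.

Theorem lemma5 (d : measure_display) (T : measurableType d) (R : realType)
  (P : probability T R) (X : {RV P >-> R}) :
  P.-integrable setT (EFin \o X) ->
  (2^-1)%:E <= P [set x | fine 'E_P[X] <= X x]%R ->
  (2^-1)%:E <= P [set x | X x <= fine 'E_P[X]]%R ->
  cond_expectation_event P X [set x | fine 'E_P[X] <= X x]%R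
    <= 'E_P[X] + sqrte 'V_P[X].
Proof.
move=> iX; set A := [set x | _ <= X x]%R => PA_ge _.
have X1 : (X : T -> R) \in Lfun P 1 by apply/Lfun1_integrable.
have EXE : 'E_P[X] = (fine 'E_P[X])%:E by rewrite fineK ?expectation_fin_num.
have [VX|VXoo] := boolP ('V_P[X] \is a fin_num); last first.
  rewrite ge0_fin_numE ?variance_ge0// -leNgt leye_eq in VXoo.
  by rewrite (eqP VXoo) EXE /= leey.
have X2 : (X : T -> R) \in Lfun P 2%:E by rewrite -variance_fin_numE.
have mA : measurable A.
  rewrite [A](_ : _ = X @^-1` `[fine 'E_P[X], +oo[); last first.
    by apply/seteqP; split => x /=; rewrite in_itv/= andbT.
  exact: measurable_funPTI.
have XA1 := Lfun2_mul_Lfun1 X2 (indic_Lfun2 P mA).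
have := covariance_le X2 (indic_Lfun2 P mA).
rewrite covariance_indic// variance_indic// /cond_expectation_event.
rewrite -expectation_mul_indic EXE -[P A]fineK ?fin_num_measure//.
rewrite -['E_P[_ * _]]fineK ?expectation_fin_num// -['V_P[X]]fineK//.
rewrite -EFin_expe -EFinM -EFinB /= -!EFinM -EFinD !lee_fin.
apply: cond_mean_bound.
by rewrite -lee_fin fineK ?fin_num_measure.
Qed.
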